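(* Let $n\ge 2$ and $M,M'\in M_n(k)$. Then the DG algebras $\mathcal{A}_{\mathcal{O}_{-1}(k^n)}(M)$ and $\mathcal{A}_{\mathcal{O}_{-1}(k^n)}(M')$ are isomorphic (as DG algebras) if and only if there exists $C=(c_{ij})_{n\times n}\in \mathrm{QPL}_n(k)$ such that $M'=C^{-1}M\,(c_{ij}^2)_{n\times n}$.
   Context: $k$ is an algebraically closed field of characteristic zero. A connected cochain DG algebra is a graded $k$-algebra $\mathcal{A}=\bigoplus_{i\ge0}\mathcal{A}^i$ with $\mathcal{A}^0=k$ and a degree $+1$ differential $\partial$ with $\partial^2=0$ satisfying the Leibniz rule $\partial(ab)=\partial(a)b+(-1)^{|a|}a\partial(b)$. $\mathcal{O}_{-1}(k^n)$ is the graded $k$-algebra generated by degree-one elements $x_1,\dots,x_n$ subject to $x_ix_j=-x_jx_i$ for $1\le i<j\le n$. For $M=(m_{ij})\in M_n(k)$, $\mathcal{A}_{\mathcal{O}_{-1}(k^n)}(M)$ denotes the connected cochain DG algebra with underlying graded algebra $\mathcal{O}_{-1}(k^n)$ and differential determined by $\partial(x_i)=\sum_{j=1}^n m_{ij}x_j^2$ and the Leibniz rule. A DG algebra isomorphism is an isomorphism of graded algebras commuting with the differentials. $\mathrm{QPL}_n(k)$ is the set of invertible $n\times n$ matrices over $k$ having exactly one nonzero entry in each row and each column (nonsingular quasi-permutation matrices). For $C=(c_{ij})$, $(c_{ij}^2)_{n\times n}$ is the matrix of entrywise squares. *)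

From HB Require Import structures.
From mathcomp Require Import all_boot all_order all_algebra.
From mathcomp Require Import mpoly.
Set Implicit Arguments. Unset Strict Implicit. Unset Printing Implicit Defensive.
Import Order.TTheory GRing.Theory.
Local Open Scope ring_scope.

(* The graded algebra O_{-1}(k^n) is modelled on the k-vector space
   {mpoly k[n]}, whose basis is the set of ordered monomials
   x^a = x_1^{a_1} ... x_n^{a_n}  ('X_[a]).  The (skew) multiplication is
   x^a * x^b = (-1)^{sum_{i>j} a_i b_j} x^{a+b}, which is exactly the
   product of O_{-1}(k^n) (x_i x_j = - x_j x_i for i <> j) in this basis. *)

Section Skew.
Variables (k : fieldType) (n : nat).

Definition osign (m1 m2 : 'X_{1..n}) : k :=
  (-1) ^+ (\sum_(i < n) \sum_(j < n | (j < i)%N) (m1 i * m2 j))%N.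

Definition omul (p q : {mpoly k[n]}) : {mpoly k[n]} :=
  \sum_(m1 <- msupp p) \sum_(m2 <- msupp q)
     (osign m1 m2 * p@_m1 * q@_m2) *: 'X_[(m1 + m2)%MM].

Definition ogen (i : 'I_n) : {mpoly k[n]} := 'X_i.

Definition ohomog (d : nat) (p : {mpoly k[n]}) : bool :=
  all (fun m => mdeg m == d) (msupp p).

Definition dgen (M : 'M[k]_n) (i : 'I_n) : {mpoly k[n]} :=
  \sum_(j < n) M i j *: omul (ogen j) (ogen j).

(* For the ordered monomial x^a, the (s+1)-th copy of x_i splits x^a as
   x^a = L * x_i * R with L = x_1^{a_1}..x_{i-1}^{a_{i-1}} x_i^s and
   R = x_i^{a_i-s-1} x_{i+1}^{a_{i+1}} .. x_n^{a_n}. *)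
Definition mleft (a : 'X_{1..n}) (i : 'I_n) (s : nat) : 'X_{1..n} :=
  [multinom (if (j < i)%N then a j else if j == i then s else 0%N) | j < n].
Definition mright (a : 'X_{1..n}) (i : 'I_n) (s : nat) : 'X_{1..n} :=
  [multinom (if (j < i)%N then 0%N else if j == i then (a i - s - 1)%N
             else a j) | j < n].

(* The differential of A(M) on a basis monomial: the unique extension by the
   graded Leibniz rule, d(y_1...y_N) = sum_t (-1)^{t-1} y_1..y_{t-1} d(y_t)
   y_{t+1}..y_N, for degree-one letters y_t. *)
Definition dmon (M : 'M[k]_n) (a : 'X_{1..n}) : {mpoly k[n]} :=
  \sum_(i < n) \sum_(s < a i)
    ((-1) ^+ (mdeg (mleft a i s))) *:
       omul (omul 'X_[mleft a i s] (dgen M i)) 'X_[mright a i s].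

Definition dA (M : 'M[k]_n) (p : {mpoly k[n]}) : {mpoly k[n]} :=
  \sum_(m <- msupp p) p@_m *: dmon M m.

Definition graded_alg_iso (phi : {mpoly k[n]} -> {mpoly k[n]}) : Prop :=
  [/\ (forall (c : k) p q, phi (c *: p + q) = c *: phi p + phi q),
      phi 1 = 1,
      (forall p q, phi (omul p q) = omul (phi p) (phi q)),
      (forall d p, ohomog d p -> ohomog d (phi p)) &
      bijective phi].

Definition dg_isomorphic (M M' : 'M[k]_n) : Prop :=
  exists phi : {mpoly k[n]} -> {mpoly k[n]},
    graded_alg_iso phi /\ forall p, phi (dA M p) = dA M' (phi p).

Definition QPL (C : 'M[k]_n) : bool :=
  [&& C \in unitmx,
      [forall i, #|[set j | C i j != 0]| == 1%N] &
      [forall j, #|[set i | C i j != 0]| == 1%N]].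

End Skew.

From HB Require Import structures.
From mathcomp Require Import all_boot all_order all_algebra.
From mathcomp Require Import mpoly.
From mathcomp Require Import fingroup perm.
From mathcomp Require Import ring zify.
Set Implicit Arguments. Unset Strict Implicit. Unset Printing Implicit Defensive.
Import GRing.Theory.
Local Open Scope ring_scope.

(* A DG isomorphism phi preserves degrees, so phi x_i = sum_j c_ij x_j for an
   invertible matrix C = (c_ij).  For i <> j, x_i x_j + x_j x_i = 0, and the
   coefficient of x_l^2 in its image is 2 c_il c_jl; as 2 <> 0, distinct rows
   of C have disjoint supports, which for an invertible matrix forces C to be a
   quasi-permutation matrix.  Comparing the coefficients of the squares x_l^2
   in phi (d x_i) = d' (phi x_i) gives M C^(2) = C M'.
   Conversely, write C = (d_i [j = s i]) for a permutation s.  The map sending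
   x^a to (prod_i d_i^(a_i)) (-1)^(e(a)) x^(s a), where e(a) sums a_i a_j over
   the inversions i < j, s j < s i of s, is an isomorphism of graded algebras:
   the sign accounts for reordering the letters after renaming x_i to x_(s i).
   Since squares are central, d x^a = sum_i (+-) [a_i odd] x^(a - e_i) d x_i,
   and M C^(2) = C M' reads d_i M'_(s i, s l) = M_(i l) d_l^2, which is exactly
   what is needed for this map to intertwine the differentials. *)

Local Notation "U2_( j )" := (U_(j) + U_(j))%MM (format "U2_( j )").

Section LinearExtension.
Variables (k : fieldType) (n : nat) (V : lmodType k).
Local Notation P := {mpoly k[n]}.

Definition mlinext (F : 'X_{1..n} -> V) (p : P) : V :=
  \sum_(m <- msupp p) p@_m *: F m.

Lemma mlinext_seq (F : 'X_{1..n} -> V) p s :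
  uniq s -> {subset msupp p <= s} -> mlinext F p = \sum_(m <- s) p@_m *: F m.
Proof.
move=> s_uniq supp_s; rewrite (bigID (mem (msupp p))) /= [X in _ + X]big1 ?addr0.
  rewrite -big_filter; apply/perm_big/uniq_perm; rewrite ?filter_uniq ?msupp_uniq //.
  by move=> m; rewrite mem_filter andb_idr //; apply: supp_s.
by move=> m /memN_msupp_eq0 ->; rewrite scale0r.
Qed.

Lemma mlinext_is_linear F : linear (mlinext F).
Proof.
move=> c p q; set s := undup (msupp p ++ msupp q ++ msupp (c *: p + q)).
have [sub_p sub_q sub_pq] : [/\ {subset msupp p <= s}, {subset msupp q <= s}
    & {subset msupp (c *: p + q) <= s}].
  by split=> m m_supp; rewrite mem_undup !mem_cat m_supp ?orbT.
rewrite !(@mlinext_seq F _ s) ?undup_uniq // scaler_sumr -big_split; apply: eq_bigr => m _.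
by rewrite mcoeffD mcoeffZ scalerDl scalerA.
Qed.

HB.instance Definition _ F :=
  GRing.isLinear.Build k P V *:%R (mlinext F) (mlinext_is_linear F).

Lemma mlinextX F m : mlinext F 'X_[m] = F m.
Proof. by rewrite /mlinext msuppX big_seq1 mcoeffX eqxx scale1r. Qed.

Lemma linear_mpoly_eq (f g : P -> V) : linear f -> linear g ->
  (forall m, f 'X_[m] = g 'X_[m]) -> f =1 g.
Proof.
move=> f_lin g_lin fg p.
pose fL : {linear P -> V} := HB.pack f (GRing.isLinear.Build _ _ _ _ f f_lin).
pose gL : {linear P -> V} := HB.pack g (GRing.isLinear.Build _ _ _ _ g g_lin).
rewrite (mpolyE p) -[f _]/(fL _) -[g _]/(gL _) !linear_sum.
by apply: eq_bigr => m _; rewrite !linearZ /= fg.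
Qed.

End LinearExtension.

Section MultinomialForms.
Variable n : nat.
Implicit Types (Q : rel 'I_n) (a b c : 'X_{1..n}) (i : 'I_n).

Lemma sum_mnm1 (P : pred 'I_n) i : (\sum_(j < n | P j) U_(i)%MM j)%N = P i.
Proof.
rewrite big_mkcond (bigD1 i) //= big1 => [|j ji]; last first.
  by rewrite mnm1E eq_sym (negbTE ji); case: (P j).
by rewrite mnm1E eqxx addn0; case: (P i).
Qed.

Lemma sum_addmnm1 (P : pred 'I_n) b i :
  (\sum_(j < n | P j) (b + U_(i))%MM j = \sum_(j < n | P j) b j + P i)%N.
Proof. by under eq_bigr do rewrite mnmDE; rewrite big_split sum_mnm1. Qed.

Definition mform Q a b : nat := \sum_(i < n) \sum_(j < n | Q i j) a i * b j.

Lemma mformDl Q a b c : mform Q (a + b) c = (mform Q a c + mform Q b c)%N.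
Proof.
rewrite /mform -big_split; apply: eq_bigr => i _; rewrite -big_split.
by apply: eq_bigr => j _; rewrite mnmDE mulnDl.
Qed.

Lemma mformDr Q a b c : mform Q a (b + c) = (mform Q a b + mform Q a c)%N.
Proof.
rewrite /mform -big_split; apply: eq_bigr => i _; rewrite -big_split.
by apply: eq_bigr => j _; rewrite mnmDE mulnDr.
Qed.

Lemma mform_tr Q a b : mform Q a b = mform (fun i j => Q j i) b a.
Proof.
rewrite /mform (exchange_big_dep xpredT) //=; apply: eq_bigr => j _.
by apply: eq_bigr => i _; rewrite mulnC.
Qed.

Lemma mform_mnm1l Q i b : mform Q U_(i) b = (\sum_(j < n | Q i j) b j)%N.
Proof.
rewrite /mform (bigD1 i) //= [X in (_ + X)%N]big1 => [|i' i'i]; last first.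
  by rewrite big1 // => j _; rewrite mnm1E eq_sym (negbTE i'i).
by rewrite addn0; apply: eq_bigr => j _; rewrite mnm1E eqxx mul1n.
Qed.

Lemma mform_mnm1r Q a j : mform Q a U_(j) = (\sum_(i < n | Q i j) a i)%N.
Proof. by rewrite mform_tr mform_mnm1l. Qed.

Lemma eq_mform Q Q' : Q =2 Q' -> mform Q =2 mform Q'.
Proof. by move=> eqQ a b; apply: eq_bigr => i _; apply: eq_bigl => j; rewrite eqQ. Qed.

Variable R : comPzRingType.

Lemma sign_sum_addb (I : Type) (r : seq I) (P1 P2 : pred I) (F : I -> nat) :
  (-1) ^+ (\sum_(i <- r | P1 i (+) P2 i) F i) =
  (-1) ^+ (\sum_(i <- r | P1 i) F i) * (-1) ^+ (\sum_(i <- r | P2 i) F i) :> R.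
Proof.
elim: r => [|x r IH]; first by rewrite !big_nil mulr1.
rewrite !big_cons; case: (P1 x); case: (P2 x); rewrite /= ?exprD IH //.
- by rewrite mulrACA -expr2 sqrr_sign mul1r.
- by rewrite mulrA.
- by rewrite mulrCA.
Qed.

Lemma sign_mform_addb Q1 Q2 a b :
  (-1) ^+ mform (fun i j => Q1 i j (+) Q2 i j) a b =
  (-1) ^+ mform Q1 a b * (-1) ^+ mform Q2 a b :> R.
Proof.
rewrite /mform !(big_morph _ (exprD (-1 : R)) (expr0 _)) -big_split /=.
by apply: eq_bigr => i _; apply: sign_sum_addb.
Qed.

Lemma sign_mform_add_double Q a c :
  (-1) ^+ mform Q (a + (c + c)) (a + (c + c)) = (-1) ^+ mform Q a a :> R.
Proof.
rewrite !(mformDl, mformDr); set x := mform Q a a.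
rewrite [(_ + _)%N](_ : _ = x + (mform Q a c + mform Q c a + mform Q c c *+ 2) * 2)%N.
  by rewrite exprD exprM sqrr_sign mulr1.
by rewrite /x; lia.
Qed.

End MultinomialForms.

Section SkewProduct.
Variables (k : fieldType) (n : nat).
Local Notation P := {mpoly k[n]}.
Implicit Types (a b c : 'X_{1..n}) (p q : P).

Lemma osignE a b : osign k a b = (-1) ^+ mform (fun i j => (j < i)%N) a b.
Proof. by []. Qed.

Lemma osignDl a b c : osign k (a + b) c = osign k a c * osign k b c.
Proof. by rewrite !osignE mformDl exprD. Qed.

Lemma osignDr a b c : osign k a (b + c) = osign k a b * osign k a c.
Proof. by rewrite !osignE mformDr exprD. Qed.

Lemma osign_sqr a b : osign k a b ^+ 2 = 1.
Proof. exact: sqrr_sign. Qed.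

Lemma osign_mnm1 (i j : 'I_n) : osign k U_(i) U_(j) = (-1) ^+ (j < i)%N.
Proof. by rewrite osignE mform_mnm1l sum_mnm1. Qed.

Lemma omulE p q : omul p q =
  mlinext (fun a => mlinext (fun b => osign k a b *: 'X_[a + b]) q) p.
Proof.
rewrite /omul /mlinext; apply: eq_bigr => a _; rewrite scaler_sumr.
by apply: eq_bigr => b _; rewrite !scalerA; congr (_ *: _); ring.
Qed.

Lemma omulEr p q : omul p q =
  mlinext (fun b => mlinext (fun a => osign k a b *: 'X_[a + b]) p) q.
Proof.
rewrite /omul /mlinext exchange_big; apply: eq_bigr => b _; rewrite scaler_sumr.
by apply: eq_bigr => a _; rewrite !scalerA; congr (_ *: _); ring.
Qed.

Lemma omul_is_bilinear : bilinear_for *:%R *:%R (@omul k n).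
Proof.
split=> [q c p p' | p c q q'] /=.
- by rewrite !omulE linearP.
- by rewrite !omulEr linearP.
Qed.

HB.instance Definition _ :=
  bilinear_isBilinear.Build k P P P *:%R *:%R (@omul k n) omul_is_bilinear.

Lemma omulX a b : omul 'X_[a] 'X_[b] = osign k a b *: ('X_[a + b] : P).
Proof. by rewrite omulE !mlinextX. Qed.

Lemma omul_mnm1_sq (j : 'I_n) : omul 'X_j 'X_j = 'X_[U2_(j)] :> P.
Proof. by rewrite omulX osign_mnm1 ltnn scale1r. Qed.

End SkewProduct.

Section Differential.
Variables (k : fieldType) (n : nat) (M : 'M[k]_n).
Local Notation P := {mpoly k[n]}.
Implicit Types (a : 'X_{1..n}) (i : 'I_n).

HB.instance Definition _ := GRing.Linear.copy (dA M) (mlinext (dmon M)).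

Lemma dAX a : dA M 'X_[a] = dmon M a.
Proof. exact: mlinextX. Qed.

Lemma dgenE i : dgen M i = \sum_(l < n) M i l *: ('X_[U2_(l)] : P).
Proof. by apply: eq_bigr => l _; rewrite omul_mnm1_sq. Qed.

Lemma mdeg_mleft a i s : mdeg (mleft a i s) = (\sum_(j < n | (j < i)%N) a j + s)%N.
Proof.
rewrite -[s in RHS](@big_pred1_eq _ 0%N addn _ i (fun=> s)).
rewrite mdegE [X in (X + _)%N]big_mkcond [X in (_ + X)%N]big_mkcond -big_split /=.
apply: eq_bigr => j _; rewrite mnmE.
by case: (eqVneq j i) => [->|_]; rewrite ?ltnn ?addn0.
Qed.

Lemma mleftDmright a i s : (s < a i)%N ->
  (mleft a i s + mright a i s)%MM = (a - U_(i))%MM.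
Proof.
move=> lt_s; apply/mnmP => j; rewrite mnmDE mnmBE mnm1E !mnmE.
case: (eqVneq j i) => [->|_]; first by rewrite ltnn /=; lia.
by case: ltnP; rewrite ?subn0 ?addn0.
Qed.

Lemma osign_mleft_mright a i s : osign k (mleft a i s) (mright a i s) = 1.
Proof.
rewrite /osign big1 ?expr0 // => l _; rewrite big1 // => j jl; rewrite !mnmE.
case: (ltnP l i) => [li|il]; first by rewrite (ltn_trans jl li) muln0.
by case: eqP => [el|]; rewrite ?mul0n // -el jl muln0.
Qed.

Lemma sum_sign_shift (t N : nat) :
  \sum_(s < N) (-1) ^+ (t + s) = (-1) ^+ t * (odd N)%:R :> k.
Proof.
elim: N => [|N IH]; first by rewrite big_ord0 mulr0.
rewrite big_ord_recr /= IH exprD -[(-1) ^+ N]signr_odd.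
by case: (odd N); rewrite /= ?expr0 ?expr1; ring.
Qed.

Lemma dmonE a : dmon M a =
  \sum_(i < n) ((-1) ^+ (\sum_(j < n | (j < i)%N) a j) * (odd (a i))%:R)
    *: \sum_(l < n) M i l *: ('X_[a - U_(i) + U2_(l)] : P).
Proof.
apply: eq_bigr => i _; rewrite -sum_sign_shift scaler_suml.
apply: eq_bigr => s _; rewrite mdeg_mleft; congr (_ *: _).
rewrite dgenE linear_sumr linear_sumlz; apply: eq_bigr => l _.
rewrite linearZr linearZl /= !(omulX k) linearZl /= (omulX k) !scalerA.
rewrite !osignDl !osignDr osign_mleft_mright -!expr2 !osign_sqr !mulr1.
congr (_ *: 'X_[_]); rewrite -(mleftDmright (ltn_ord s)).
by apply/mnmP => j; rewrite !mnmDE; lia.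
Qed.

Lemma dA_mnm1 i : dA M 'X_i = \sum_(l < n) M i l *: ('X_[U2_(l)] : P).
Proof.
rewrite dAX dmonE (bigD1 i) //= [X in _ + X]big1 => [|j ji]; last first.
  by rewrite mnm1E eq_sym (negbTE ji) mulr0 scale0r.
rewrite big1 => [|j]; last by rewrite mnm1E; case: eqP => // ->; rewrite ltnn.
rewrite mnm1E eqxx mul1r scale1r addr0; apply: eq_bigr => l _.
by congr (_ *: 'X_[_]); apply/mnmP => j; rewrite !mnmDE mnmBE subnn.
Qed.

End Differential.

Section Coefficients.
Variables (k : fieldType) (n : nat).
Local Notation P := {mpoly k[n]}.

Lemma mcoeff_sumX (al : 'I_n -> k) (F : 'I_n -> 'X_{1..n}) m :
  injective F -> (\sum_l al l *: ('X_[F l] : P))@_(F m) = al m.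
Proof.
move=> F_inj; rewrite raddf_sum (bigD1 m) //= big1 => [|l lm]; last first.
  by rewrite mcoeffZ mcoeffX (inj_eq F_inj) (negbTE lm) mulr0.
by rewrite mcoeffZ mcoeffX eqxx mulr1 addr0.
Qed.

Lemma mnm1_inj : injective (fun l : 'I_n => U_(l)%MM).
Proof. by move=> l m /eqP; rewrite eq_mnm1 => /eqP. Qed.

Lemma eq_mnm1D (a b l : 'I_n) : ((U_(a) + U_(b))%MM == U2_(l)) = (a == l) && (b == l).
Proof.
apply/eqP/andP => [/mnmP /(_ l)|[/eqP -> /eqP ->]] //.
by rewrite !mnmDE !mnm1E eqxx; case: (a == l); case: (b == l).
Qed.

Lemma mnm1_sq_inj : injective (fun l : 'I_n => U2_(l)).
Proof. by move=> l m /eqP; rewrite eq_mnm1D andbb => /eqP. Qed.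

Lemma mcoeff_omul_sq (al be : 'I_n -> k) (l : 'I_n) :
  (omul (\sum_a al a *: ('X_a : P)) (\sum_b be b *: 'X_b))@_U2_(l) = al l * be l.
Proof.
have coef a b : (omul (al a *: ('X_a : P)) (be b *: 'X_b))@_U2_(l) =
    if (a == l) && (b == l) then al l * be l else 0.
  rewrite linearZl linearZr /= (omulX k) !mcoeffZ mcoeffX eq_mnm1D.
  by case: eqP => [->|]; case: eqP => [->|] /=; rewrite ?osign_mnm1 ?ltnn ?mulr0 // !mulr1.
rewrite linear_sumlz raddf_sum (bigD1 l) //= [X in _ + X]big1 => [|a a_l]; last first.
  by rewrite linear_sumr raddf_sum big1 // => b _; rewrite /= coef (negbTE a_l).
rewrite addr0 linear_sumr raddf_sum (bigD1 l) //= [X in _ + X]big1 => [|b b_l]; last first.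
  by rewrite /= coef (negbTE b_l) andbF.
by rewrite /= coef !eqxx !addr0.
Qed.

Lemma ohomog1E (p : P) : ohomog 1 p -> p = \sum_j p@_U_(j) *: 'X_j.
Proof.
move=> /allP p1; rewrite {1}(mpolyE p) -/(mlinext (fun m => 'X_[m] : P) p).
rewrite (@mlinext_seq _ _ _ _ _ [seq U_(j)%MM | j <- enum 'I_n]).
- by rewrite big_map big_enum.
- by rewrite (map_inj_uniq mnm1_inj) enum_uniq.
- by move=> m /p1 /mdeg1P [j /eqP ->]; rewrite map_f ?mem_enum.
Qed.

End Coefficients.

Section QuasiPermutation.
Variables (k : fieldType) (n : nat) (C : 'M[k]_n).
Hypothesis C_unit : C \in unitmx.

Lemma unitmx_row_neq0 i : exists j, C i j != 0.
Proof.
have /matrix0Pn [a [j]] : row i C != 0.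
  apply/eqP => /(congr1 (mulmx^~ (invmx C))) /=.
  rewrite rowE mulmxK // mul0mx => /matrixP /(_ 0 i) /eqP.
  by rewrite !mxE !eqxx oner_eq0.
by rewrite mxE; exists j.
Qed.

Lemma unitmx_col_neq0 j : exists i, C i j != 0.
Proof.
have /matrix0Pn [i [a]] : col j C != 0.
  apply/eqP => /(congr1 (mulmx (invmx C))) /=.
  rewrite colE mulKmx // mulmx0 => /matrixP /(_ j 0) /eqP.
  by rewrite !mxE !eqxx oner_eq0.
by rewrite mxE; exists i.
Qed.

Hypothesis C_disjoint_rows : forall i i' j, i != i' -> C i j * C i' j = 0.

Lemma col_support_uniq i i' j : C i j != 0 -> C i' j != 0 -> i' = i.
Proof.
move=> nz nz'; apply/eqP/negPn/negP => ne.
by have /eqP := C_disjoint_rows j ne; rewrite mulf_eq0 (negbTE nz) (negbTE nz').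
Qed.

(* Two nonzero entries in row i would make columns j and j' proportional. *)
Lemma row_support_uniq i j j' : C i j != 0 -> C i j' != 0 -> j' = j.
Proof.
move=> nz nz'; apply/eqP/negPn/negP => ne.
pose v : 'cV[k]_n := C i j' *: delta_mx j 0 - C i j *: delta_mx j' 0.
have Cv0 : C *m v = 0.
  rewrite mulmxBr -!scalemxAr -!colE; apply/matrixP => r a; rewrite !mxE.
  have [->|ri] := eqVneq r i; first by rewrite mulrC subrr.
  have zero l : C i l != 0 -> C r l = 0.
    by move=> nzl; apply/eqP/negPn/negP => /(col_support_uniq nzl) /eqP; rewrite (negbTE ri).
  by rewrite zero // zero // !mulr0 subrr.
have /matrixP /(_ j 0) := congr1 (mulmx (invmx C)) Cv0.
rewrite mulKmx // mulmx0 !mxE !eqxx eq_sym (negbTE ne) /= mulr1 mulr0 subr0.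
by move/eqP; rewrite (negbTE nz').
Qed.

Lemma QPL_of_disjoint_rows : QPL C.
Proof.
apply/and3P; split=> //; apply/forallP.
- move=> i; have [j nz] := unitmx_row_neq0 i; apply/cards1P; exists j.
  by apply/setP => j'; rewrite !inE; apply/idP/eqP => [/(row_support_uniq nz)|->].
- move=> j; have [i nz] := unitmx_col_neq0 j; apply/cards1P; exists i.
  by apply/setP => i'; rewrite !inE; apply/idP/eqP => [/(col_support_uniq nz)|->].
Qed.

End QuasiPermutation.

Section IsomorphismMatrix.
Variables (k : fieldType) (n : nat) (M M' : 'M[k]_n).
Local Notation P := {mpoly k[n]}.
Variable phi : P -> P.
Hypotheses (phi_linear : linear phi)
  (phi_mul : forall p q, phi (omul p q) = omul (phi p) (phi q))
  (phi_homog1 : forall p, ohomog 1 p -> ohomog 1 (phi p))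
  (phi_inj : injective phi)
  (phi_dA : forall p, phi (dA M p) = dA M' (phi p)).

HB.instance Definition _ := GRing.isLinear.Build k P P *:%R phi phi_linear.

Definition iso_mx : 'M[k]_n := \matrix_(i, j) (phi 'X_i)@_U_(j).

Lemma phi_mnm1 i : phi 'X_i = \sum_j iso_mx i j *: 'X_j.
Proof.
rewrite (ohomog1E (phi_homog1 _)); last by rewrite /ohomog msuppX /= mdeg1.
by apply: eq_bigr => j _; rewrite mxE.
Qed.

Lemma phi_linear_form (v : 'rV[k]_n) :
  phi (\sum_i v 0 i *: 'X_i) = \sum_j (v *m iso_mx) 0 j *: 'X_j.
Proof.
rewrite linear_sum /=.
under eq_bigr do rewrite linearZ /= phi_mnm1 scaler_sumr.
rewrite exchange_big /=; apply: eq_bigr => j _.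
by rewrite mxE scaler_suml; apply: eq_bigr => i _; rewrite scalerA.
Qed.

Lemma iso_mx_unit : iso_mx \in unitmx.
Proof.
rewrite -row_free_unit -kermx_eq0; apply: contraT => /matrix0Pn [r [a nz]].
set v := row r (kermx iso_mx).
have v_ker : v *m iso_mx = 0 by rewrite -row_mul mulmx_ker row0.
have : phi (\sum_i v 0 i *: 'X_i) = phi 0.
  have phi0 : phi 0 = 0 := linear0 phi.
  by rewrite phi_linear_form v_ker phi0 big1 // => j _; rewrite mxE scale0r.
move/phi_inj/(congr1 (mcoeff U_(a))); rewrite (mcoeff_sumX _ _ (@mnm1_inj n)).
by rewrite mcoeff0 mxE => /eqP; rewrite (negbTE nz).
Qed.

Lemma iso_mx_disjoint_rows : 2%:R != 0 :> k ->
  forall i j l, i != j -> iso_mx i l * iso_mx j l = 0.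
Proof.
move=> two_neq0 i j l ij.
have anticomm : omul (phi 'X_i) (phi 'X_j) + omul (phi 'X_j) (phi 'X_i) = 0.
  rewrite -!phi_mul -linearD !(omulX k) !osign_mnm1 addmC -scalerDl.
  have -> : (-1) ^+ (j < i)%N + (-1) ^+ (i < j)%N = 0 :> k.
    by case: ltngtP ij => [||/val_inj ->]; rewrite ?eqxx // expr0 expr1 ?addrN ?addNr.
  by rewrite scale0r; apply: linear0.
move: (congr1 (mcoeff U2_(l)) anticomm); rewrite mcoeffD !phi_mnm1 !mcoeff_omul_sq.
rewrite mcoeff0 [iso_mx j l * _]mulrC -mulr2n -mulr_natl => /eqP.
by rewrite mulf_eq0 (negbTE two_neq0) => /eqP.
Qed.

Lemma iso_mx_intertwine : M *m map_mx (fun c => c ^+ 2) iso_mx = iso_mx *m M'.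
Proof.
apply/matrixP => i l; rewrite !mxE.
have := congr1 (mcoeff U2_(l)) (phi_dA 'X_i).
rewrite dA_mnm1 phi_mnm1 [dA M' _]linear_sum [phi _]linear_sum !raddf_sum /=.
have lhs j : (phi (M i j *: 'X_[U2_(j)]))@_U2_(l) = M i j * iso_mx j l ^+ 2.
  by rewrite linearZ /= mcoeffZ -omul_mnm1_sq phi_mul phi_mnm1 mcoeff_omul_sq expr2.
have rhs j : (dA M' (iso_mx i j *: 'X_j))@_U2_(l) = iso_mx i j * M' j l.
  by rewrite linearZ /= mcoeffZ dA_mnm1 (mcoeff_sumX _ _ (@mnm1_sq_inj n)).
rewrite (eq_bigr _ (fun j _ => lhs j)) (eq_bigr _ (fun j _ => rhs j)) => <-.
by apply: eq_bigr => j _; rewrite mxE.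
Qed.

End IsomorphismMatrix.

Lemma dg_isomorphic_QPL (k : fieldType) n (M M' : 'M[k]_n) : 2%:R != 0 :> k ->
  dg_isomorphic M M' ->
  exists C : 'M[k]_n, QPL C /\ M' = invmx C *m M *m map_mx (fun c => c ^+ 2) C.
Proof.
move=> two_neq0 [phi [[phi_lin _ phi_mul phi_homog /bij_inj phi_inj] phi_dA]].
have phi_homog1 p : ohomog 1 p -> ohomog 1 (phi p) := phi_homog 1 p.
have C_unit := iso_mx_unit phi_lin phi_homog1 phi_inj.
exists (iso_mx phi); split.
  exact: QPL_of_disjoint_rows C_unit (iso_mx_disjoint_rows phi_lin phi_mul phi_homog1 two_neq0).
by rewrite -mulmxA (iso_mx_intertwine phi_lin phi_mul phi_homog1 phi_dA) mulKmx.
Qed.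

Section PermutedMonomials.
Variables (n : nat) (s : 'S_n).
Implicit Types (a b : 'X_{1..n}) (i j : 'I_n).

Definition mperm a : 'X_{1..n} := [multinom a ((s^-1)%g j) | j < n].

Lemma mpermE a i : mperm a (s i) = a i.
Proof. by rewrite mnmE permK. Qed.

Lemma mpermD a b : mperm (a + b) = (mperm a + mperm b)%MM.
Proof. by apply/mnmP => j; rewrite !(mnmE, mnmDE). Qed.

Lemma mpermB a b : mperm (a - b) = (mperm a - mperm b)%MM.
Proof. by apply/mnmP => j; rewrite !(mnmE, mnmBE). Qed.

Lemma mperm0 : mperm 0 = 0%MM.
Proof. by apply/mnmP => j; rewrite mnmE !mnm0E. Qed.

Lemma mperm_mnm1 i : mperm U_(i) = U_(s i)%MM.
Proof.
apply/mnmP => j; rewrite mnmE !mnm1E.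
by congr (nat_of_bool _); apply/eqP/eqP => [->|<-]; rewrite ?permKV ?permK.
Qed.

Lemma mdeg_mperm a : mdeg (mperm a) = mdeg a.
Proof.
by rewrite !mdegE (reindex_inj (@perm_inj _ s)); apply: eq_bigr => i _; rewrite mpermE.
Qed.

Lemma osign_mperm (k : fieldType) a b :
  osign k (mperm a) (mperm b) = (-1) ^+ mform (fun i j => s j < s i)%N a b.
Proof.
rewrite /osign /mform (reindex_inj (@perm_inj _ s)); congr (_ ^+ _).
apply: eq_bigr => i _; rewrite (reindex_inj (@perm_inj _ s)) /=.
by apply: eq_bigr => j _; rewrite !mpermE.
Qed.

Lemma sum_mperm_lt a i :
  (\sum_(j < n | (j < s i)%N) mperm a j = \sum_(j < n | (s j < s i)%N) a j)%N.
Proof. by rewrite (reindex_inj (@perm_inj _ s)); apply: eq_bigr => j _; rewrite mpermE. Qed.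

Definition inversion : rel 'I_n := fun i j => (i < j)%N && (s j < s i)%N.

Lemma ltn_inversion i j :
  (j < i)%N = inversion j i (+) inversion i j (+) (s j < s i)%N.
Proof.
rewrite /inversion; have [->|ij] := eqVneq i j; first by rewrite !ltnn.
have sij : s i != s j by rewrite (inj_eq perm_inj).
move: ij sij; rewrite -!val_eqE !neq_ltn /=.
by case: (ltngtP j i); case: (ltngtP (s j) (s i)).
Qed.

End PermutedMonomials.

Lemma mpermK n (s : 'S_n) : cancel (mperm s) (mperm s^-1).
Proof. by move=> a; apply/mnmP => j; rewrite mnmE invgK mpermE. Qed.

Lemma mpermKV n (s : 'S_n) : cancel (mperm s^-1) (mperm s).
Proof. by move=> b; apply/mnmP => j; rewrite !mnmE invgK permKV. Qed.

Section QuasiPermutationMap.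
Variables (k : fieldType) (n : nat) (s : 'S_n) (d : 'I_n -> k).
Local Notation P := {mpoly k[n]}.
Implicit Types (a b : 'X_{1..n}) (p q : P).

Definition inv_sign a : k := (-1) ^+ mform (inversion s) a a.

Lemma inv_signD a b : osign k a b * inv_sign (a + b) =
  inv_sign a * inv_sign b * osign k (mperm s a) (mperm s b).
Proof.
set sab := (-1) ^+ mform (inversion s) a b : k.
set sba := (-1) ^+ mform (inversion s) b a : k.
have -> : osign k a b = sba * sab * osign k (mperm s a) (mperm s b).
  rewrite osignE osign_mperm /sba /sab [mform _ b a]mform_tr -!sign_mform_addb.
  by congr (_ ^+ _); apply: eq_mform => i j; apply: ltn_inversion.
have sab2 : sab * sab = 1 by rewrite -expr2 sqrr_sign.
have sba2 : sba * sba = 1 by rewrite -expr2 sqrr_sign.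
rewrite /inv_sign mformDl !mformDr !exprD -/sab -/sba.
transitivity ((-1) ^+ mform (inversion s) a a * (-1) ^+ mform (inversion s) b b *
  osign k (mperm s a) (mperm s b) * (sab * sab) * (sba * sba) : k); first by ring.
by rewrite sab2 sba2 !mulr1.
Qed.

Lemma mmap1D a b : mmap1 d (a + b) = mmap1 d a * mmap1 d b.
Proof. by apply: commr_mmap1_M => i x; apply: mulrC. Qed.

Definition qp_weight a : k := mmap1 d a * inv_sign a.

Lemma qp_weightD a b : osign k a b * qp_weight (a + b) =
  qp_weight a * qp_weight b * osign k (mperm s a) (mperm s b).
Proof.
by rewrite /qp_weight mmap1D mulrCA inv_signD; ring.
Qed.

Lemma qp_weight0 : qp_weight 0 = 1.
Proof.
rewrite /qp_weight /inv_sign mmap11 mul1r /mform big1 // => i _.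
by rewrite big1 // => j _; rewrite mnm0E.
Qed.

Lemma qp_weight_neq0 : (forall i, d i != 0) -> forall a, qp_weight a != 0.
Proof.
move=> d_neq0 a; rewrite mulf_neq0 ?signr_eq0 //.
by apply/prodf_neq0 => i _; apply: expf_neq0.
Qed.

Lemma qp_weight_add_sq a l : qp_weight (a + U2_(l)) = qp_weight a * d l ^+ 2.
Proof.
rewrite /qp_weight /inv_sign sign_mform_add_double mmap1D !mmap1D mmap1U.
by rewrite mulrAC expr2.
Qed.

Lemma qp_weight_add_mnm1 a i : qp_weight (a + U_(i)) =
  qp_weight a * d i * (-1) ^+ (\sum_(j < n | inversion s j i (+) inversion s i j) a j).
Proof.
rewrite /qp_weight /inv_sign mmap1D mmap1U mformDl !mformDr mform_mnm1r !mform_mnm1l.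
rewrite sum_mnm1 [inversion s i i]/inversion ltnn addn0 sign_sum_addb !exprD; ring.
Qed.

(* The isomorphism attached to the quasi-permutation matrix with entry d i
   at (i, s i). *)
Definition qpmap : P -> P := mlinext (fun a => qp_weight a *: 'X_[mperm s a]).

HB.instance Definition _ :=
  GRing.Linear.copy qpmap (mlinext (fun a => qp_weight a *: 'X_[mperm s a])).

Lemma qpmapX a : qpmap 'X_[a] = qp_weight a *: 'X_[mperm s a].
Proof. exact: mlinextX. Qed.

Lemma qpmap1 : qpmap 1 = 1.
Proof. by rewrite -mpolyX0 qpmapX mperm0 qp_weight0 scale1r. Qed.

Lemma qpmap_omul p q : qpmap (omul p q) = omul (qpmap p) (qpmap q).
Proof.
move: p; apply: linear_mpoly_eq => [c u v | c u v | a] /=.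
- by rewrite linearPl linearP.
- by rewrite linearP linearPl.
move: q; apply: linear_mpoly_eq => [c u v | c u v | b] /=.
- by rewrite linearPr linearP.
- by rewrite linearP linearPr.
rewrite (omulX k) linearZ /= !qpmapX linearZl linearZr /= (omulX k) !scalerA -mpermD.
by rewrite qp_weightD.
Qed.

Lemma qpmap_homog e p : ohomog e p -> ohomog e (qpmap p).
Proof.
move=> /allP p_e; apply/allP => m /msupp_sum_le /flattenP [sq].
case/mapP => a; rewrite filter_predT => a_p -> /msuppZ_le /msuppZ_le.
by rewrite msuppX inE => /eqP ->; rewrite mdeg_mperm; apply: p_e.
Qed.

Lemma qpmap_bij : (forall i, d i != 0) -> bijective qpmap.
Proof.
move=> d_neq0.
pose psi := mlinext (fun b => (qp_weight (mperm s^-1 b))^-1 *: ('X_[mperm s^-1 b] : P)).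
exists psi; apply: linear_mpoly_eq => [c u v | // | a] /=; rewrite /psi ?linearP //.
- by rewrite qpmapX linearZ /= mlinextX mpermK scalerA mulfV ?qp_weight_neq0 ?scale1r.
- by rewrite mlinextX linearZ /= qpmapX mpermKV scalerA mulVf ?qp_weight_neq0 ?scale1r.
Qed.

Section Intertwining.
Variables M M' : 'M[k]_n.
Hypothesis dMM' : forall i l, d i * M' (s i) (s l) = M i l * d l ^+ 2.

Lemma qp_weight_dmon a i l : odd (a i) ->
  (-1) ^+ (\sum_(j < n | (j < i)%N) a j) * M i l * qp_weight (a - U_(i) + U2_(l)) =
  qp_weight a * (-1) ^+ (\sum_(j < n | (s j < s i)%N) a j) * M' (s i) (s l).
Proof.
move=> /odd_gt0 a_i; have [b ->] : exists b, a = (b + U_(i))%MM.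
  exists (a - U_(i))%MM; apply/mnmP => j; rewrite mnmDE mnmBE mnm1E.
  by case: eqP => [<-|_] /=; lia.
rewrite addmK !sum_addmnm1 !ltnn !addn0 qp_weight_add_sq qp_weight_add_mnm1.
have -> : (-1) ^+ (\sum_(j < n | (j < i)%N) b j) =
    (-1) ^+ (\sum_(j < n | inversion s j i (+) inversion s i j) b j) *
    (-1) ^+ (\sum_(j < n | (s j < s i)%N) b j) :> k.
  by rewrite -sign_sum_addb; congr (_ ^+ _); apply: eq_bigl => j; apply: ltn_inversion.
transitivity (qp_weight b * (-1) ^+ (\sum_(j < n | inversion s j i (+) inversion s i j) b j)
  * (-1) ^+ (\sum_(j < n | (s j < s i)%N) b j) * (M i l * d l ^+ 2)); first by ring.
by rewrite -dMM'; ring.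
Qed.

Lemma qpmap_dA p : qpmap (dA M p) = dA M' (qpmap p).
Proof.
move: p; apply: linear_mpoly_eq => [c u v | c u v | a] /=; rewrite ?linearP //.
rewrite dAX qpmapX linearZ /= dAX !dmonE linear_sum scaler_sumr /=.
rewrite [RHS](reindex_inj (@perm_inj _ s)) /=; apply: eq_bigr => i _.
rewrite linearZ linear_sum /= mpermE sum_mperm_lt.
have [a_i|] := boolP (odd (a i)); last by rewrite /= !mulr0 !scale0r scaler0.
rewrite /= !mulr1 !scaler_sumr [RHS](reindex_inj (@perm_inj _ s)) /=.
apply: eq_bigr => l _; rewrite linearZ /= qpmapX !scalerA.
rewrite mpermD mpermB !mperm_mnm1 mpermD !mperm_mnm1; congr (_ *: _).
by rewrite -qp_weight_dmon //; ring.
Qed.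

End Intertwining.
End QuasiPermutationMap.

Lemma QPL_perm (k : fieldType) n (C : 'M[k]_n) :
  QPL C -> exists s : 'S_n, forall i j, (C i j != 0) = (j == s i).
Proof.
case/and3P => _ /forallP rows /forallP cols.
have row1 i : exists j, [set j' | C i j' != 0] == [set j].
  by have /cards1P [j ->] := rows i; exists j.
pose f i := xchoose (row1 i).
have fE i j : (C i j != 0) = (j == f i).
  by move/eqP/setP: (xchooseP (row1 i)) => /(_ j); rewrite !inE.
have f_inj : injective f.
  move=> i i' eq_f; have /cards1P [x /setP col_x] := cols (f i).
  have := col_x i; have := col_x i'; rewrite !inE !fE eq_f eqxx.
  by move=> /esym/eqP -> /esym/eqP ->.
by exists (perm f_inj) => i j; rewrite permE fE.
Qed.

Lemma QPL_dg_isomorphic (k : fieldType) n (M M' C : 'M[k]_n) : QPL C ->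
  M' = invmx C *m M *m map_mx (fun c => c ^+ 2) C -> dg_isomorphic M M'.
Proof.
move=> C_QPL M'E; have /and3P [C_unit _ _] := C_QPL.
have [s Cs] := QPL_perm C_QPL; pose d i := C i (s i).
have C0 i j : j != s i -> C i j = 0 by rewrite -Cs negbK => /eqP.
have dMM' i l : d i * M' (s i) (s l) = M i l * d l ^+ 2.
  have : C *m M' = M *m map_mx (fun c => c ^+ 2) C.
    by rewrite M'E !mulmxA mulmxV // mul1mx.
  move/matrixP => /(_ i (s l)); rewrite !mxE (bigD1 (s i)) //= big1 => [|j /C0 ->]; last first.
    by rewrite mul0r.
  rewrite (bigD1 l) //= big1 => [|j lj]; last first.
    by rewrite mxE C0 ?expr0n ?mulr0 // (inj_eq perm_inj) eq_sym.
  by rewrite mxE !addr0.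
exists (qpmap s d); split; last exact: qpmap_dA.
split=> [c p q | | | | ]; first exact: linearP.
- exact: qpmap1.
- exact: qpmap_omul.
- exact: qpmap_homog.
- by apply: qpmap_bij => i; rewrite /d Cs.
Qed.

Theorem theorem3p6 (k : closedFieldType) (k_char0 : [pchar k] =i pred0)
    (n : nat) (n_ge2 : (2 <= n)%N) (M M' : 'M[k]_n) :
  dg_isomorphic M M' <->
  exists C : 'M[k]_n,
    QPL C /\ M' = invmx C *m M *m map_mx (fun c => c ^+ 2) C.
Proof.
have two_neq0 : 2%:R != 0 :> k.
  by apply/negP => /(natf0_pchar (isT : (0 < 2)%N)) [p]; rewrite k_char0.
split; first exact: dg_isomorphic_QPL.
by case=> C [C_QPL M'E]; exact: QPL_dg_isomorphic C_QPL M'E.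
Qed.
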